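(* Let $k\ge2$ be an integer. If $\Delta>0$ is sufficiently large, then there exists $\epsilon > 0$ such that, as $z = \eta + iy \to 0$ within the region $\Delta \eta \leq |y| \leq \pi$ (with $\eta>0$), writing $q=e^{-z}$, \[ |\xi_k(q)| \ll_{k,\Delta} \xi_k(|q|)e^{-\epsilon/\eta}. \]
   Context: $\xi_k(q) \coloneqq \frac{(q^k;q^k)_\infty}{(q;q)_\infty}$, where $(a;q)_\infty \coloneqq \prod_{n\ge1}(1-aq^{n-1})$. *)

From mathcomp Require Import all_boot all_order all_algebra.
From mathcomp Require Import all_classical all_reals all_analysis.
From mathcomp Require Import complex.
Import Order.TTheory GRing.Theory Num.Theory.
Import numFieldNormedType.Exports.
Local Open Scope ring_scope.
Local Open Scope classical_set_scope.

Definition qpoch_inf {K : numFieldType} (a q : K) : K :=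
  lim ((fun N : nat => \prod_(n < N) (1 - a * q ^+ n)) @ \oo).

Definition xi {K : numFieldType} (k : nat) (q : K) : K :=
  qpoch_inf (q ^+ k) (q ^+ k) / qpoch_inf q q.

(* q = e^{-z} for z = eta + i y, i.e. e^{-eta} (cos y - i sin y) *)
Definition qexp {R : realType} (eta y : R) : R[i] :=
  ((expR (- eta) * cos y) +i* (- (expR (- eta) * sin y)))%C.

(* Cut (q;q)_(kM) into M blocks of k consecutive factors: the last factor of
   each block gives (q^k;q^k)_M, so xi_k(q) is the limit of the reciprocal of
   the product of the remaining factors 1 - q^n, k not dividing n.  Each of
   them satisfies |1 - q^n| >= 1 - |q|^n, which alone gives
   |xi_k(q)| <= xi_k(|q|).  For the first factor of each of the first
   L ~ 1/(2k eta) blocks, n = km + 1 and |q|^n >= 1/2, and then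
   |1 - q^n| >= (1 - |q|^n) exp((1 - cos ny)/8).  The angles (km + 1)y form an
   arithmetic progression of step ky with |sin(ky/2)| >> k eta, so the cosines
   nearly cancel and the total gain is exp(L/8 - O(1/(k|y|))); with
   |y| >= 16 eta this is at least exp(1/(32 k eta) - 1/8). *)

From mathcomp Require Import all_boot all_order all_algebra.
From mathcomp Require Import all_classical all_reals all_analysis.
From mathcomp Require Import complex.
From mathcomp Require Import ring lra zify.
Import Order.TTheory GRing.Theory Num.Theory.
Import numFieldNormedType.Exports.
Import Normc.
Local Open Scope ring_scope.
Local Open Scope classical_set_scope.

Definition qpochn {K : comPzRingType} (a q : K) (N : nat) : K :=
  \prod_(n < N) (1 - a * q ^+ n).

Definition qblock {K : comPzRingType} (k : nat) (q : K) (m : nat) : K :=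
  \prod_(j < k.-1) (1 - q ^+ (k * m + j).+1).

Definition qblocks {K : comPzRingType} (k : nat) (q : K) (M : nat) : K :=
  \prod_(m < M) qblock k q m.

Lemma qpochn_split {K : comPzRingType} (k : nat) (q : K) (M : nat) : (0 < k)%N ->
  qpochn q q (k * M) = qpochn (q ^+ k) (q ^+ k) M * qblocks k q M.
Proof.
move=> k0; elim: M => [|M IH]; first by rewrite muln0 /qpochn /qblocks !big_ord0 mulr1.
rewrite mulnS addnC [qpochn q q _]big_split_ord -/(qpochn q q (k * M)) IH.
have -> : \prod_(j < k) (1 - q * q ^+ (k * M + j)) =
          qblock k q M * (1 - q ^+ k * (q ^+ k) ^+ M).
  rewrite -(prednK k0) big_ord_recr /= prednK //; congr (_ * (1 - _)).
    by apply: eq_bigr => j _; rewrite -exprS.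
  by rewrite -exprS -exprM -exprD; congr (q ^+ _); lia.
rewrite /qpochn /qblocks [in RHS]big_ord_recr [X in _ = _ * X]big_ord_recr /=.
ring.
Qed.

Lemma cvg_mulnl_subseq {T : topologicalType} {u : nat -> T} {l : T} {k : nat} :
  (0 < k)%N -> u @ \oo --> l -> u (k * M)%N @[M --> \oo] --> l.
Proof.
move=> k0; apply: cvg_trans; move=> P [N _ NP]; exists N => // M /= NM.
by apply: NP; rewrite /= (leq_trans NM) // leq_pmull.
Qed.

Section trigonometry.
Context {R : realType}.
Implicit Types x : R.

Lemma sin_le x : 0 <= x -> sin x <= x.
Proof.
move=> x0.
have Dsub (v : R) : is_derive v 1 (fun u : R => u - sin u) (1 - cos v) by apply: is_deriveB.
suff : 0 - sin 0 <= x - sin x by rewrite sin0 subr0 subr_ge0.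
apply: (@ger0_derive1_ndecry R (fun u => u - sin u) 0) => //.
- by move=> v _; rewrite derive1E (@derive_val _ _ _ _ _ _ _ (Dsub v)) subr_ge0 cos_le1.
- apply: continuous_subspaceT => v.
  exact: continuousB (@cvg_id _ _) (@continuous_sin R v).
Qed.

Lemma normr_sin_le x : `|sin x| <= `|x|.
Proof.
wlog x0 : x / 0 <= x.
  move=> H; have [/H //|/ltW x0] := lerP 0 x.
  by rewrite -normrN -sinN -(normrN x) H // oppr_ge0.
rewrite (ger0_norm x0); case: (lerP x 1) => [x1|/ltW x1]; last first.
  exact: le_trans (sin_max x) x1.
rewrite ger0_norm ?sin_le // sin_ge0_pi // x0 (le_trans x1) //.
by rewrite (le_trans _ (@pi_ge2 R)) // ler1n.
Qed.

Lemma sin_norm_le x : sin `|x| <= `|sin x|.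
Proof.
by case: (ger0P x) => _; [exact: ler_norm | rewrite sinN -normrN; exact: ler_norm].
Qed.

Lemma cos_ge1B_sqr x : 1 - x ^+ 2 / 2 <= cos x.
Proof.
have -> : x = (x / 2) *+ 2 by rewrite -mulr_natr mulfVK.
rewrite cos_mulr2n cos2sin2.
have : sin (x / 2) ^+ 2 <= (x / 2) ^+ 2.
  have := normr_sin_le (x / 2).
  by rewrite -(@ler_pXn2r _ 2) ?nnegrE // !real_normK ?num_real.
rewrite -mulr_natr; lra.
Qed.

Lemma sin_ge_half x : 0 <= x <= 1 -> x / 2 <= sin x.
Proof.
case/andP=> x0 x1.
have Dsub (v : R) : is_derive v 1 (fun u : R => 2 * sin u - u) (2 * cos v - 1).
  by apply: is_deriveB; apply: is_deriveM.
suff : 2 * sin 0 - 0 <= 2 * sin x - x by rewrite sin0 mulr0 subr0; lra.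
apply: (@ger0_derive1_ndecr R (fun u => 2 * sin u - u) 0 1) => //.
- move=> v; rewrite in_itv /= => /andP[v0 v1].
  rewrite derive1E (@derive_val _ _ _ _ _ _ _ (Dsub v)).
  have := cos_ge1B_sqr v; nra.
- apply: continuous_subspaceT => v.
  apply/differentiable_continuous/derivable1_diffP.
  exact: (@ex_derive _ _ _ _ _ _ _ (Dsub v)).
Qed.

Lemma sin_half_mul_sum_cos (a b : R) L :
  (sin (b / 2) * \sum_(m < L) cos (a + m%:R * b)) *+ 2 =
  sin (a + L%:R * b - b / 2) - sin (a - b / 2).
Proof.
elim: L => [|L IH]; first by rewrite big_ord0 mulr0 mul0rn mul0r addr0 subrr.
rewrite big_ord_recr /= mulrDr mulrnDl IH.
have -> : a + L.+1%:R * b - b / 2 = (a + L%:R * b) + b / 2.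
  by rewrite -addn1 natrD; field.
rewrite (sinD (a + L%:R * b) (b / 2)) (sinB (a + L%:R * b) (b / 2)) !mulr2n; ring.
Qed.

Lemma sum_1Bcos_ge (a b : R) L : 0 < `|sin (b / 2)| ->
  L%:R - `|sin (b / 2)|^-1 <= \sum_(m < L) (1 - cos (a + m%:R * b)).
Proof.
move=> s0; rewrite sumrB sumr_const card_ord lerD2l lerN2.
set S := \sum_(m < L) _.
have : `|(sin (b / 2) * S) *+ 2| <= 2.
  rewrite sin_half_mul_sum_cos; apply: le_trans (ler_normB _ _) _.
  by have := sin_max (a + L%:R * b - b / 2); have := sin_max (a - b / 2); lra.
rewrite normrMn normrM => h.
have sS : `|sin (b / 2)| * `|S| <= 1 by move: h; rewrite mulr2n; lra.
apply: le_trans (ler_norm S) _.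
by rewrite -(ler_pM2l s0) mulfV ?gt_eqF.
Qed.

Lemma sum_1Bcos_ge_truncn k (eta y : R) : (0 < k)%N -> 0 < eta ->
  16 * eta <= `|y| -> k%:R * `|y| < 1 ->
  (4 * k%:R * eta)^-1 - 1 <=
    \sum_(m < Num.trunc ((2 * k%:R * eta)^-1)) (1 - cos ((k * m).+1%:R * y)).
Proof.
move=> k0 eta0 y16 ky1.
have kR : 0 < k%:R :> R by rewrite ltr0n.
set X := (2 * k%:R * eta)^-1; set u := (4 * k%:R * eta)^-1.
have Xu : X = 2 * u by rewrite /X /u; field; rewrite !gt_eqF.
have arith_prog m : (k * m).+1%:R * y = y + m%:R * (k%:R * y).
  by rewrite -addn1 natrD natrM; ring.
under eq_bigr do rewrite arith_prog.
set s := `|sin (k%:R * y / 2)|.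
have hs : k%:R * `|y| / 4 <= s.
  have t_eq : `|k%:R * y / 2| = k%:R * `|y| / 2.
    by rewrite !normrM (ger0_norm (ltW kR)) normfV (@ger0_norm _ 2).
  have t01 : 0 <= `|k%:R * y / 2| <= 1 by rewrite normr_ge0 t_eq /=; lra.
  have := sin_ge_half _ t01; have := sin_norm_le (k%:R * y / 2).
  by rewrite -/s t_eq; lra.
have y0 : 0 < `|y| by apply: lt_le_trans y16; rewrite mulr_gt0.
have s0 : 0 < s by apply: lt_le_trans hs; rewrite !mulr_gt0.
have sinv : s^-1 <= u.
  rewrite /u lef_pV2 ?posrE ?mulr_gt0 //; apply: le_trans hs.
  have : 0 <= k%:R * (`|y| - 16 * eta) by rewrite mulr_ge0 ?subr_ge0 // ltW.
  lra.
have truncX : X - 1 <= (Num.trunc X)%:R.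
  by have := truncnS_gt X; rewrite -addn1 natrD; lra.
have := sum_1Bcos_ge y (k%:R * y) (Num.trunc X) s0; lra.
Qed.

End trigonometry.

Section exponential.
Context {R : realType}.
Implicit Types (t x : R).

Lemma expR_half_le1D x : 0 <= x <= 1 -> expR (x / 2) <= 1 + x.
Proof.
move=> /andP[x0 x1].
have : 1 - x / 2 <= expR (- (x / 2)) by exact: expR_ge1Dx.
rewrite expRN -[X in _ <= X]div1r ler_pdivlMr ?expR_gt0 // => h.
have := expR_gt0 (x / 2); nra.
Qed.

Lemma expRN_le1B x t : 0 <= x <= t -> t < 1 -> expR (- (x / (1 - t))) <= 1 - x.
Proof.
move=> /andP[x0 xt] t1; set u := x / (1 - t).
have ut : u * (1 - t) = x by rewrite mulfVK // subr_eq0 gt_eqF.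
have u0 : 0 <= u by rewrite divr_ge0 // subr_ge0 ltW.
rewrite expRN -div1r ler_pdivrMr ?expR_gt0 //.
apply: le_trans (ler_wpM2l _ (expR_ge1Dx u)); nra.
Qed.

Lemma expRN_truncn_ge_half k (eta : R) : (0 < k)%N -> 0 < eta ->
  1 / 2 <= expR (- eta) ^+ (k * Num.trunc ((2 * k%:R * eta)^-1)).
Proof.
move=> k0 eta0; set X := (2 * k%:R * eta)^-1.
have kR : 0 < k%:R :> R by rewrite ltr0n.
have kXeta : k%:R * X * eta = 1 / 2 by rewrite /X; field; rewrite !gt_eqF.
have : k%:R * (Num.trunc X)%:R * eta <= 1 / 2.
  rewrite -kXeta; apply: ler_wpM2r; first exact: ltW.
  apply: ler_wpM2l; first exact: ltW.
  by rewrite truncn_le invr_ge0 ltW // !mulr_gt0.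
rewrite -expRM_natl natrM => h; apply: le_trans (expR_ge1Dx _); lra.
Qed.

Lemma sum_expr_le (t : R) N : 0 <= t < 1 -> \sum_(n < N) t ^+ n <= (1 - t)^-1.
Proof.
case/andP=> t0 t1.
have e : (1 - t) * \sum_(n < N) t ^+ n = 1 - t ^+ N.
  elim: N => [|N IH]; first by rewrite big_ord0 mulr0 expr0 subrr.
  by rewrite big_ord_recr /= mulrDr IH exprS; ring.
rewrite -(@ler_pM2l _ (1 - t)) ?subr_gt0 // e mulfV ?subr_eq0 ?gt_eqF //.
by rewrite gerBl exprn_ge0.
Qed.

Lemma cvgn_geometric_increments (a : R ^nat) (E t : R) : 0 <= t < 1 ->
  (forall n, `|a n.+1 - a n| <= E * t ^+ n) -> cvgn a.
Proof.
move=> /andP[t0 t1] da.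
have E0 : 0 <= E by have := da 0%N; rewrite expr0 mulr1; apply: le_trans.
suff cvg_telescope : cvgn (series (telescope a)).
  have -> : a = cst (a 0%N) + series (telescope a).
    by apply/funext => n; rewrite [LHS]eq_sum_telescope.
  exact: is_cvgD (is_cvg_cst _) cvg_telescope.
apply: normed_cvg; apply: (@series_le_cvg _ _ (geometric E t)) => [n|n|n|].
- exact: normr_ge0.
- by rewrite geometric_ge0.
- exact: da.
- by apply: is_cvg_geometric_series; rewrite ger0_norm.
Qed.

End exponential.

Section real_qpochhammer.
Context {R : realType}.
Implicit Types r : R.

Lemma qpochn_ge r N : 0 <= r < 1 -> expR (- (1 - r) ^- 2) <= qpochn r r N.
Proof.
move=> /andP[r0 r1].
have rn n : 0 <= r * r ^+ n <= r.
  by rewrite mulr_ge0 ?exprn_ge0 //= ler_piMr ?exprn_ile1 // ltW.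
apply: le_trans (_ : \prod_(n < N) expR (- (r * r ^+ n / (1 - r))) <= _); last first.
  by apply: ler_prod => n _; rewrite expR_ge0 expRN_le1B.
rewrite -expR_sum ler_expR sumrN lerN2 -mulr_suml expr2 invfM.
apply: ler_wpM2r; first by rewrite invr_ge0 subr_ge0 ltW.
apply: le_trans (sum_expr_le r N _); last by rewrite r0.
by apply: ler_sum => n _; rewrite ler_piMl ?exprn_ge0 // ltW.
Qed.

Lemma is_cvg_qpochn r : 0 <= r < 1 -> cvgn (qpochn r r).
Proof.
move=> r01; have /andP[r0 r1] := r01.
apply: nonincreasing_is_cvgn; last first.
  by exists (expR (- (1 - r) ^- 2)) => _ [N _ <-]; exact: qpochn_ge.
apply/nonincreasing_seqP => N; rewrite [qpochn r r N.+1]big_ord_recr /= ger_pMr.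
  by rewrite gerBl mulr_ge0 ?exprn_ge0.
exact: lt_le_trans (expR_gt0 _) (qpochn_ge _ N r01).
Qed.

Lemma qpoch_inf_gt0 r : 0 <= r < 1 -> 0 < qpoch_inf r r.
Proof.
move=> r01; apply: lt_le_trans (expR_gt0 (- (1 - r) ^- 2)) _.
by apply: limr_ge; [exact: is_cvg_qpochn | apply: nearW => N; exact: qpochn_ge].
Qed.

Lemma xi_gt0 k r : (0 < k)%N -> 0 <= r < 1 -> 0 < xi k r.
Proof.
move=> k0 /[dup] r01 /andP[r0 r1].
have rk01 : 0 <= r ^+ k < 1 by rewrite exprn_ge0 // exprn_ilt1 // -lt0n.
by rewrite divr_gt0 // qpoch_inf_gt0.
Qed.

End real_qpochhammer.

Section complex_norm.
Context {R : realType}.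
(* [R[i]] with the topology of its [numFieldType] norm, as in [qpoch_inf] *)
Local Notation C := (R[i] : numFieldType).
Implicit Types z w : R[i].

Lemma normc_ge0 z : 0 <= normc z.
Proof. exact: (@normr_ge0 _ (Rcomplex R)). Qed.

Lemma lerB_normc z w : normc z - normc w <= normc (z - w).
Proof. exact: (@lerB_dist _ (Rcomplex R)). Qed.

Lemma ler_normc_dist z w : `|normc z - normc w| <= normc (z - w).
Proof. exact: (@ler_dist_dist _ (Rcomplex R)). Qed.

Lemma normc_prod I (r : seq I) (P : pred I) (F : I -> R[i]) :
  normc (\prod_(i <- r | P i) F i) = \prod_(i <- r | P i) normc (F i).
Proof. exact: (big_morph _ (@normcM R) (@normc1 R)). Qed.

Lemma normcX z n : normc (z ^+ n) = normc z ^+ n.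
Proof. by elim: n => [|n IH]; rewrite ?normc1 // !exprS normcM IH. Qed.

Lemma ler_Re_normc z : `|complex.Re z| <= normc z.
Proof. by case: z => a b /=; rewrite -sqrtr_sqr ler_wsqrtr // lerDl sqr_ge0. Qed.

Lemma ler_Im_normc z : `|complex.Im z| <= normc z.
Proof. by case: z => a b /=; rewrite -sqrtr_sqr ler_wsqrtr // lerDr sqr_ge0. Qed.

Lemma normc_le_ReIm z : normc z <= `|complex.Re z| + `|complex.Im z|.
Proof.
case: z => a b /=.
rewrite -(@ler_pXn2r _ 2) ?nnegrE ?sqrtr_ge0 ?addr_ge0 // sqr_sqrtr ?addr_ge0 ?sqr_ge0 //.
rewrite sqrrD -[a ^+ 2](real_normK (num_real a)) -[b ^+ 2](real_normK (num_real b)).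
by rewrite lerD2r lerDl mulrn_wge0 // mulr_ge0.
Qed.

Lemma cvgC_normcP {T} (F : set_system T) {FF : Filter F} (f : T -> C) (L : C) :
  f @ F --> L <-> forall e : R, 0 < e -> \forall t \near F, normc (L - f t) < e.
Proof.
split=> [/cvgrPdist_lt fL e e0 | fL].
  by apply: filterS (fL (e%:C)%C _) => [t|]; rewrite ltcR.
apply/cvgrPdist_lt => -[a b]; rewrite ltcE /= => /andP[/eqP -> a0].
by apply: filterS (fL a a0) => t; rewrite ltcR.
Qed.

Lemma cvg_normc {T} (F : set_system T) {FF : Filter F} (f : T -> C) (L : C) :
  f @ F --> L -> (fun t => normc (f t)) @ F --> normc L.
Proof.
move=> /cvgC_normcP fL; apply/cvgrPdist_lt => e /fL.
by apply: filterS => t; apply: le_lt_trans (ler_normc_dist _ _).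
Qed.

Lemma cvgn_complex (u : nat -> C) :
  cvgn (fun n => complex.Re (u n)) -> cvgn (fun n => complex.Im (u n)) -> cvgn u.
Proof.
move=> /cvgrPdist_lt cRe /cvgrPdist_lt cIm.
set a := limn _ in cRe; set b := limn _ in cIm.
apply/cvg_ex; exists (a +i* b)%C; apply/cvgC_normcP => e e0.
have e20 : 0 < e / 2 by rewrite divr_gt0.
near=> n; apply: le_lt_trans (normc_le_ReIm _) _.
have : `|a - complex.Re (u n)| < e / 2 by near: n; exact: cRe.
have : `|b - complex.Im (u n)| < e / 2 by near: n; exact: cIm.
by case: (u n) => ? ? /=; lra.
Unshelve. all: by end_near.
Qed.

Lemma cvgn_complex_geometric_increments (u : nat -> C) (E t : R) : 0 <= t < 1 ->
  (forall n, normc (u n.+1 - u n) <= E * t ^+ n) -> cvgn u.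
Proof.
move=> t01 du; apply: cvgn_complex; apply: (@cvgn_geometric_increments _ _ E t t01) => n;
  apply: le_trans (du n); case: (u n.+1) (u n) => [a b] [c d].
- exact: (ler_Re_normc ((a - c) +i* (b - d))%C).
- exact: (ler_Im_normc ((a - c) +i* (b - d))%C).
Qed.

End complex_norm.

Section complex_qpochhammer.
Context {R : realType}.
Local Notation C := (R[i] : numFieldType).
Implicit Types (rho y : R) (w : R[i]).

Lemma is_cvg_qpochn_complex (w : C) : normc w < 1 -> cvgn (qpochn w w : nat -> C).
Proof.
move=> w1; set t := normc w.
have t01 : 0 <= t < 1 by rewrite normc_ge0.
have tn n : normc (w * w ^+ n) <= t ^+ n.
  by case/andP: t01 => t0 t1; rewrite normcM normcX -/t ler_piMl ?exprn_ge0 // ltW.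
have qpochn_le N : normc (qpochn w w N) <= expR ((1 - t)^-1).
  rewrite normc_prod; apply: le_trans (_ : \prod_(n < N) expR (t ^+ n) <= _).
    apply: ler_prod => n _; rewrite normc_ge0 /=.
    apply: le_trans (expR_ge1Dx _); apply: le_trans (lerD (lexx _) (tn n)).
    by rewrite -normc1 -[normc (w * _)]normcN; exact: le_normcD.
  by rewrite -expR_sum ler_expR sum_expr_le.
apply: (cvgn_complex_geometric_increments _ _ _ t01) => N.
have -> : qpochn w w N.+1 - qpochn w w N = - (qpochn w w N * (w * w ^+ N)).
  by rewrite [qpochn w w N.+1]big_ord_recr /= mulrBr mulr1 addrAC subrr add0r.
by rewrite normcN normcM ler_pM ?normc_ge0.
Qed.

Lemma normc_xi_le k (w : C) (G : R) : (0 < k)%N -> normc w < 1 -> 0 < G ->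
  (\forall M \near \oo, qblocks k (normc w) M * G <= normc (qblocks k w M)) ->
  normc (xi k w) <= xi k (normc w) / G.
Proof.
move=> k0 w1 G0 blocks_ge; set r := normc w.
have r01 : 0 <= r < 1 by rewrite normc_ge0.
have rk01 : 0 <= r ^+ k < 1.
  by rewrite exprn_ge0 ?normc_ge0 // exprn_ilt1 ?normc_ge0 // -lt0n.
have wk1 : normc (w ^+ k) < 1 by rewrite normcX; case/andP: rk01.
have cA := is_cvg_qpochn_complex _ wk1; have cB := is_cvg_qpochn_complex _ w1.
have ca := is_cvg_qpochn _ rk01; have cb := is_cvg_qpochn _ r01.
have la0 := qpoch_inf_gt0 _ rk01; have lb0 := qpoch_inf_gt0 _ r01.
rewrite /xi normcM normcV.
set LA := qpoch_inf (w ^+ k) _ in cA *; set LB := qpoch_inf w w in cB *.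
set la := qpoch_inf (r ^+ k) _ in ca la0 *; set lb := qpoch_inf r r in cb lb0 *.
have fl : (fun M => normc (qpochn (w ^+ k) (w ^+ k) M) * qpochn r r (k * M) * G) @ \oo
           --> normc LA * lb * G.
  apply: cvgM; last exact: cvg_cst.
  by apply: cvgM; [exact: cvg_normc cA | exact: cvg_mulnl_subseq k0 cb].
have gl : (fun M => normc (qpochn w w (k * M)) * qpochn (r ^+ k) (r ^+ k) M) @ \oo
           --> normc LB * la.
  by apply: cvgM; [exact: cvg_normc (cvg_mulnl_subseq k0 cB) | exact: ca].
have lim_le : normc LA * lb * G <= normc LB * la.
  apply: (ler_cvg_to fl gl); apply: filterS blocks_ge => M DM.
  rewrite !qpochn_split // normcM -!mulrA; apply: ler_wpM2l; first exact: normc_ge0.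
  rewrite mulrC; apply: ler_wpM2r => //.
  exact: le_trans (expR_ge0 _) (qpochn_ge _ _ rk01).
have [->|nB0] := eqVneq (normc LB) 0; first by rewrite invr0 mulr0 !divr_ge0 ?ltW.
have nBlbG : 0 < normc LB * lb * G by rewrite !mulr_gt0 // lt0r nB0 normc_ge0.
rewrite -(ler_pM2r nBlbG).
have -> : normc LA / normc LB * (normc LB * lb * G) = normc LA * lb * G by field.
have -> : la / lb / G * (normc LB * lb * G) = normc LB * la by field; rewrite !gt_eqF.
exact: lim_le.
Qed.

Definition polar rho y : R[i] := ((rho * cos y) +i* (- (rho * sin y)))%C.

Lemma polarX rho y n : polar rho y ^+ n = polar (rho ^+ n) (n%:R * y).
Proof.
elim: n => [|n IH]; first by rewrite expr0 /polar mul0r cos0 sin0 !mulr1 mulr0 oppr0.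
rewrite exprS IH /polar -addn1 natrD mulrDl mul1r cosD sinD exprD expr1.
by apply/eqP; rewrite eq_complex /=; apply/andP; split; apply/eqP; ring.
Qed.

Lemma normc_polar rho y : 0 <= rho -> normc (polar rho y) = rho.
Proof.
move=> rho0; rewrite /= sqrrN !exprMn -mulrDr addrC sin2cos2 subrK mulr1.
by rewrite sqrtr_sqr ger0_norm.
Qed.

Lemma normc_1Bpolar_sqr rho y :
  normc (1 - polar rho y) ^+ 2 = (1 - rho) ^+ 2 + 2 * rho * (1 - cos y).
Proof.
rewrite /= sqr_sqrtr ?addr_ge0 ?sqr_ge0 // opprK.
have := cos2Dsin2 y; nra.
Qed.

Lemma normc_1Bpolar_ge rho y : 1 / 2 <= rho <= 1 ->
  (1 - rho) * expR ((1 - cos y) / 8) <= normc (1 - polar rho y).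
Proof.
move=> /andP[rho1 rho2]; set c := (1 - cos y) / 2.
have c01 : 0 <= c <= 1 by have := cos_le1 y; have := cos_geN1 y; rewrite /c; lra.
have -> : (1 - cos y) / 8 = c / 2 / 2 by rewrite /c; field.
rewrite -(@ler_pXn2r _ 2) ?nnegrE ?mulr_ge0 ?normc_ge0 ?expR_ge0 ?subr_ge0 //.
rewrite exprMn -expRM_natr mulfVK // normc_1Bpolar_sqr.
apply: le_trans (ler_wpM2l (sqr_ge0 _) (expR_half_le1D _ c01)) _.
have -> : 1 - cos y = c * 2 by rewrite /c mulfVK.
have /andP[c0 _] := c01.
have : 0 <= c * (4 * rho - (1 - rho) ^+ 2) by rewrite mulr_ge0 // subr_ge0; nra.
nra.
Qed.

Lemma prod_1BX_le_normc (w : R[i]) I (s : seq I) (P : pred I) (g : I -> nat) :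
  normc w <= 1 ->
  \prod_(i <- s | P i) (1 - normc w ^+ g i) <= normc (\prod_(i <- s | P i) (1 - w ^+ g i)).
Proof.
move=> w1; rewrite normc_prod; apply: ler_prod => i _.
rewrite subr_ge0 exprn_ile1 ?normc_ge0 //=.
by rewrite -normc1 -normcX lerB_normc.
Qed.

Lemma qblock_ge0 (r : R) k m : 0 <= r <= 1 -> 0 <= qblock k r m.
Proof.
by move=> /andP[r0 r1]; apply: prodr_ge0 => j _; rewrite subr_ge0 exprn_ile1.
Qed.

Lemma qblock_polar_ge (r y : R) k m : (1 < k)%N -> 0 <= r <= 1 ->
  1 / 2 <= r ^+ (k * m).+1 ->
  qblock k r m * expR ((1 - cos ((k * m).+1%:R * y)) / 8)
    <= normc (qblock k (polar r y) m).
Proof.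
case: k => [|[|k]] // _ /andP[r0 r1] rkm.
have nq : normc (polar r y) = r by exact: normc_polar.
rewrite /qblock /= !big_ord_recl addn0 normcM mulrAC.
apply: ler_pM.
- by rewrite mulr_ge0 ?expR_ge0 // subr_ge0 exprn_ile1.
- by apply: prodr_ge0 => j _; rewrite subr_ge0 exprn_ile1.
- by rewrite polarX; apply: normc_1Bpolar_ge; rewrite rkm exprn_ile1.
- by rewrite -{1}nq prod_1BX_le_normc ?nq.
Qed.

Lemma qblocks_polar_ge (r y : R) k L M : (1 < k)%N -> 0 <= r <= 1 ->
  1 / 2 <= r ^+ (k * L) -> (L <= M)%N ->
  qblocks k r M * expR ((\sum_(m < L) (1 - cos ((k * m).+1%:R * y))) / 8)
    <= normc (qblocks k (polar r y) M).
Proof.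
move=> k1 /[dup] r01 /andP[r0 r1] rkL LM.
pose c m := if (m < L)%N then (1 - cos ((k * m).+1%:R * y)) / 8 else 0.
have -> : (\sum_(m < L) (1 - cos ((k * m).+1%:R * y))) / 8 = \sum_(m < M) c m.
  rewrite mulr_suml (big_ord_widen M (fun m => (1 - cos ((k * m).+1%:R * y)) / 8) LM).
  by rewrite big_mkcond.
rewrite expR_sum /qblocks -big_split normc_prod /=.
apply: ler_prod => m _; rewrite mulr_ge0 ?expR_ge0 ?qblock_ge0 //=.
rewrite /c; case: ifP => [mL | _].
  apply: qblock_polar_ge => //; apply: le_trans rkL _.
  rewrite ler_wiXn2l ?r0 //; apply: leq_trans (leq_mul (leqnn k) mL).
  by rewrite mulnS; lia.
by rewrite expR0 mulr1 -{1}(normc_polar r y r0) prod_1BX_le_normc ?normc_polar.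
Qed.

End complex_qpochhammer.

Theorem lemma3p10 (R : realType) (k : nat) (hk : (2 <= k)%N) :
  exists Delta0 : R, forall Delta : R, Delta0 <= Delta ->
    exists eps : R, 0 < eps /\
    exists C : R, 0 < C /\
    exists delta : R, 0 < delta /\
    forall eta y : R,
      0 < eta -> Delta * eta <= `|y| -> `|y| <= pi ->
      eta < delta -> `|y| < delta ->
      Normc.normc (xi k (qexp eta y))
        <= C * xi k (expR (- eta)) * expR (- (eps / eta)).
Proof.
have k0 : (0 < k)%N by exact: ltnW.
have kR : 0 < k%:R :> R by rewrite ltr0n.
exists 16 => Delta D16; exists (32 * k%:R)^-1; split; first by rewrite invr_gt0 mulr_gt0.
exists (expR (1 / 8)); split; first exact: expR_gt0.
exists k%:R^-1; split; first by rewrite invr_gt0.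
move=> eta y eta0 Dy _ _ yk; set r := expR (- eta).
have r01 : 0 <= r < 1 by rewrite expR_ge0 expR_lt1 oppr_lt0.
have y16 : 16 * eta <= `|y| by apply: le_trans Dy; rewrite ler_wpM2r // ltW.
have ky1 : k%:R * `|y| < 1 by rewrite mulrC -ltr_pdivlMr // div1r.
have T_ge := sum_1Bcos_ge_truncn _ _ _ k0 eta0 y16 ky1.
set T := \sum_(m < _) _ in T_ge.
have nq : normc (qexp eta y) = r := normc_polar _ y (expR_ge0 _).
have xi_le : normc (xi k (qexp eta y)) <= xi k r / expR (T / 8).
  rewrite -nq; apply: normc_xi_le; rewrite ?nq ?expR_gt0 //; first by case/andP: r01.
  near=> M; apply: qblocks_polar_ge => //; first by case/andP: r01 => -> /ltW.
    exact: expRN_truncn_ge_half.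
  by near: M; exact: nbhs_infty_ge.
apply: le_trans xi_le _.
have -> : expR (1 / 8) * xi k r * expR (- ((32 * k%:R)^-1 / eta)) =
          xi k r * expR (1 / 8 - (4 * k%:R * eta)^-1 / 8).
  have -> : (32 * k%:R)^-1 / eta = (4 * k%:R * eta)^-1 / 8 by field; rewrite !gt_eqF.
  by rewrite expRD; ring.
rewrite -expRN; apply: ler_wpM2l; first exact/ltW/xi_gt0.
rewrite ler_expR; lra.
Unshelve. all: by end_near.
Qed.
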